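(* Let $\delta_1,\delta_2,\delta_3>0$ with $\delta_3>2\delta_2$. There is a constant $C$ such that for all $n\ge1$, on the event $A_n$, $$|I_n^0|\le C\,n^{-\frac34+\frac{\delta_1}{2}}.$$
   Context: $Y$ is a simple symmetric random walk on $\mathbb Z$ with $Y_0=0$, with local time $\eta_n(y)=\sum_{k=0}^n\mathbf 1_{\{Y_k=y\}}$. $A_n=\{\max_{0\le k\le2n}|Y_k|<n^{1/2+\delta_1}\}\cap\{\max_{y\in\mathbb Z}\eta_{2n-1}(y)<n^{1/2+\delta_2}\}$. Set $d_{n,3}=n^{1/2+\delta_3}$, $b_n=n^{\delta_2}/d_{n,3}$, and $$I_n^0=\int_{|t|\le b_n}\prod_{y\in\mathbb Z}\cos\big(\eta_{2n-1}(y)\,t\big)\,e^{-t^2d_{n,3}^2/2}\,dt$$ (only finitely many factors differ from $1$). *)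

From Stdlib Require Import Reals ZArith List Lra Lia.
From Coquelicot Require Import Coquelicot.
Open Scope R_scope.

Definition srw_path (Y : nat -> Z) : Prop :=
  Y 0%nat = 0%Z /\ forall k : nat, Z.abs (Y (S k) - Y k) = 1%Z.

Definition local_time (Y : nat -> Z) (m : nat) (y : Z) : nat :=
  length (filter (fun k => Z.eqb (Y k) y) (seq 0 (S m))).

Definition event_A (d1 d2 : R) (Y : nat -> Z) (n : nat) : Prop :=
  (forall k : nat, (k <= 2 * n)%nat ->
     IZR (Z.abs (Y k)) < Rpower (INR n) (1/2 + d1)) /\
  (forall y : Z, INR (local_time Y (2 * n - 1) y) < Rpower (INR n) (1/2 + d2)).

Definition d_n3 (d3 : R) (n : nat) : R := Rpower (INR n) (1/2 + d3).
Definition b_n (d2 d3 : R) (n : nat) : R := Rpower (INR n) d2 / d_n3 d3 n.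

(* The sites y in [-2n, 2n]; the walk up to time 2n-1 never leaves this
   window, so every factor cos(eta_{2n-1}(y) t) with y outside it equals 1. *)
Definition sites (n : nat) : list Z :=
  map (fun i => (Z.of_nat i - Z.of_nat (2 * n))%Z) (seq 0 (4 * n + 1)).

Definition prod_cos (Y : nat -> Z) (n : nat) (t : R) : R :=
  fold_right Rmult 1
    (map (fun y => cos (INR (local_time Y (2 * n - 1) y) * t)) (sites n)).

Definition I0 (d2 d3 : R) (Y : nat -> Z) (n : nat) : R :=
  RInt (fun t => prod_cos Y n t * exp (- (t ^ 2 * (d_n3 d3 n) ^ 2) / 2))
       (- b_n d2 d3 n) (b_n d2 d3 n).

(** On [A_n] every phase [eta(y) t] with [|t| <= b_n] lies in [[-1, 1]], where
    [0 <= cos x <= 1 / (1 + x^2/4)]; multiplying these bounds gives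
    [|prod_y cos(eta(y) t)| <= 1 / (1 + t^2 S / 4)] with [S = sum_y eta(y)^2],
    and dropping the Gaussian factor, [|I_n^0| <= pi / sqrt(S/4)].
    The walk visits at most [2M+1] sites, [M = n^(1/2+d1)], during [2n] steps,
    so Cauchy-Schwarz gives [(2n)^2 <= (2M+1) S], i.e.
    [pi / sqrt(S/4) = O(sqrt M / n) = O(n^(-3/4+d1/2))]. *)
From Stdlib Require Import Reals ZArith List Lra Lia Psatz.
From Coquelicot Require Import Coquelicot.
Open Scope R_scope.

Lemma cos_le_inv_one_plus_sqr (x : R) :
  Rabs x <= 1 -> 0 <= cos x <= 1 / (1 + x ^ 2 / 4).
Proof.
  intro Habs. assert (Hx : -1 <= x <= 1)
    by (unfold Rabs in Habs; destruct (Rcase_abs x); lra).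
  pose proof PI2_1. split; [apply cos_ge_0; lra|].
  assert (Htaylor : cos x <= 1 - x ^ 2 / 2 + x ^ 4 / 24).
  { destruct (cos_bound x 0) as [_ Hup]; try lra.
    unfold cos_approx, cos_term in Hup. simpl in Hup. lra. }
  assert (Hx2 : 0 <= x ^ 2 <= 1) by nra.
  assert (Hx4 : x ^ 4 <= x ^ 2) by (replace (x ^ 4) with (x ^ 2 * x ^ 2) by ring; nra).
  replace (1 / (1 + x ^ 2 / 4)) with (1 - x ^ 2 / 4 + (x ^ 2 / 4) ^ 2 / (1 + x ^ 2 / 4))
    by (field; lra).
  assert (0 <= (x ^ 2 / 4) ^ 2 / (1 + x ^ 2 / 4))
    by (apply Rdiv_le_0_compat; [apply pow2_ge_0 | lra]).
  lra.
Qed.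

Definition lsum {A} (l : list A) (f : A -> R) : R :=
  fold_right (fun x acc => f x + acc) 0 l.

Section ListSums.
Context {A : Type}.
Implicit Types (l : list A) (f g : A -> R).

Lemma lsum_ext l f g : (forall x, In x l -> f x = g x) -> lsum l f = lsum l g.
Proof.
  induction l as [|a l IH]; simpl; intros H; [reflexivity|].
  rewrite H, IH by auto. reflexivity.
Qed.

Lemma lsum_le l f g : (forall x, In x l -> f x <= g x) -> lsum l f <= lsum l g.
Proof.
  induction l as [|a l IH]; simpl; intros H; [lra|].
  specialize (IH (fun x h => H x (or_intror h))).
  specialize (H a (or_introl eq_refl)). lra.
Qed.

Lemma lsum_plus l f g : lsum l (fun x => f x + g x) = lsum l f + lsum l g.
Proof. induction l as [|a l IH]; simpl; [lra|]. rewrite IH. lra. Qed.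

Lemma lsum_scal l c f : lsum l (fun x => c * f x) = c * lsum l f.
Proof. induction l as [|a l IH]; simpl; [lra|]. rewrite IH. lra. Qed.

Lemma lsum_const l c : lsum l (fun _ => c) = INR (length l) * c.
Proof.
  induction l as [|a l IH]; [simpl; lra|].
  cbn [length lsum fold_right]. fold (lsum l (fun _ => c)). rewrite IH, S_INR. lra.
Qed.

Lemma lsum_nonneg l f : (forall x, In x l -> 0 <= f x) -> 0 <= lsum l f.
Proof.
  intro H. replace 0 with (lsum l (fun _ => 0)) by (rewrite lsum_const; lra).
  now apply lsum_le.
Qed.

Lemma lsum_filter (p : A -> bool) l f :
  lsum (filter p l) f = lsum l (fun x => if p x then f x else 0).
Proof.
  induction l as [|a l IH]; simpl; [reflexivity|].
  destruct (p a); simpl; rewrite IH; lra.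
Qed.

Lemma INR_length_filter (p : A -> bool) l :
  INR (length (filter p l)) = lsum l (fun x => if p x then 1 else 0).
Proof.
  rewrite <- (Rmult_1_r (INR _)), <- lsum_const, lsum_filter.
  apply lsum_ext. intros x _. now destruct (p x).
Qed.

Lemma lsum_cauchy_schwarz l f :
  lsum l f ^ 2 <= INR (length l) * lsum l (fun x => f x ^ 2).
Proof.
  set (L := INR (length l)); set (T := lsum l f); set (Q := lsum l (fun x => f x ^ 2)).
  assert (Hinner : forall x, lsum l (fun y => (f x - f y) ^ 2)
                             = L * f x ^ 2 + Q + (-2 * f x) * T).
  { intro x. rewrite (lsum_ext _ _ (fun y => f x ^ 2 + (f y ^ 2 + (-2 * f x) * f y)))
      by (intros; ring).
    rewrite !lsum_plus, lsum_const, lsum_scal. fold L Q T. ring. }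
  assert (Hdouble : lsum l (fun x => lsum l (fun y => (f x - f y) ^ 2))
                    = 2 * (L * Q - T ^ 2)).
  { rewrite (lsum_ext _ _ (fun x => L * f x ^ 2 + (Q + (-2 * T) * f x)))
      by (intros; rewrite Hinner; ring).
    rewrite !lsum_plus, lsum_const, !lsum_scal. fold L Q T. ring. }
  assert (0 <= lsum l (fun x => lsum l (fun y => (f x - f y) ^ 2))).
  { apply lsum_nonneg. intros. apply lsum_nonneg. intros. apply pow2_ge_0. }
  lra.
Qed.

Lemma prod_le_inv_one_plus_lsum l (c v : A -> R) :
  (forall x, In x l -> 0 <= v x /\ 0 <= c x <= 1 / (1 + v x)) ->
  0 <= fold_right Rmult 1 (map c l) <= 1 / (1 + lsum l v).
Proof.
  intro H. enough (0 <= lsum l v /\ 0 <= fold_right Rmult 1 (map c l) <= 1 / (1 + lsum l v))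
    by tauto.
  induction l as [|a l IH]; simpl; [lra|].
  destruct (IH (fun x h => H x (or_intror h))) as [HV [HP0 HP]].
  destruct (H a (or_introl eq_refl)) as [Hva [Hca0 Hca]].
  set (P := fold_right Rmult 1 (map c l)) in *; set (V := lsum l v) in *.
  split; [lra|]. split; [apply Rmult_le_pos; lra|].
  apply Rle_trans with (1 / (1 + v a) * (1 / (1 + V))); [apply Rmult_le_compat; lra|].
  replace (1 / (1 + v a) * (1 / (1 + V))) with (1 / ((1 + v a) * (1 + V))) by (field; lra).
  apply Rmult_le_compat_l; [lra|]. apply Rinv_le_contravar; nra.
Qed.

End ListSums.

Lemma lsum_swap {A B} (l : list A) (l' : list B) (F : A -> B -> R) :
  lsum l (fun x => lsum l' (F x)) = lsum l' (fun y => lsum l (fun x => F x y)).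
Proof.
  induction l as [|a l IH].
  - change (0 = lsum l' (fun _ => 0)). rewrite lsum_const. lra.
  - simpl. rewrite IH, <- lsum_plus. reflexivity.
Qed.

Lemma lsum_delta (l : list Z) z (g : Z -> R) : NoDup l -> In z l ->
  lsum l (fun y => if Z.eqb z y then g y else 0) = g z.
Proof.
  induction l as [|a l IH]; intros Hnd Hin; [contradiction|].
  inversion Hnd as [|? ? Ha Hl]; subst. simpl.
  destruct (Z.eqb_spec z a) as [<-|Hza].
  - rewrite (lsum_ext _ _ (fun _ => 0)), lsum_const; [lra|].
    intros y Hy. destruct (Z.eqb_spec z y); [subst; contradiction | reflexivity].
  - destruct Hin as [->|Hin]; [contradiction|]. rewrite IH by assumption. lra.
Qed.

Definition window (K : nat) : list Z :=
  map (fun i => (Z.of_nat i - Z.of_nat K)%Z) (seq 0 (2 * K + 1)).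

Lemma in_window K z : (Z.abs z <= Z.of_nat K)%Z -> In z (window K).
Proof.
  intro H. apply in_map_iff. exists (Z.to_nat (z + Z.of_nat K)).
  split; [lia|]. apply in_seq. lia.
Qed.

Lemma NoDup_window K : NoDup (window K).
Proof.
  apply NoDup_map_NoDup_ForallPairs; [|apply seq_NoDup].
  intros x y _ _ H. lia.
Qed.

Lemma sites_window n : sites n = window (2 * n).
Proof. unfold sites, window. do 3 f_equal. lia. Qed.

Lemma length_filter_abs_le (l : list Z) K : NoDup l ->
  (length (filter (fun y => Z.abs y <=? Z.of_nat K)%Z l) <= 2 * K + 1)%nat.
Proof.
  intro Hnd. replace (2 * K + 1)%nat with (length (window K))
    by (unfold window; now rewrite length_map, length_seq).
  apply NoDup_incl_length; [now apply NoDup_filter|].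
  intros z Hz. apply filter_In in Hz. apply in_window. lia.
Qed.

Lemma abs_le_Zfloor (M : R) (z : Z) : IZR (Z.abs z) < M ->
  (Z.abs z <= Z.of_nat (Z.to_nat (Zfloor M)))%Z.
Proof.
  intro H. assert (Hz : (Z.abs z <= Zfloor M)%Z) by (apply Zfloor_lub; lra). lia.
Qed.

Lemma INR_Zfloor_le (M : R) : 0 <= M -> INR (Z.to_nat (Zfloor M)) <= M.
Proof.
  intro HM. assert (H0 : (0 <= Zfloor M)%Z) by (apply Zfloor_lub; simpl; lra).
  rewrite INR_IZR_INZ, Z2Nat.id by exact H0. apply Zfloor_bound.
Qed.

Definition eta (Y : nat -> Z) (n : nat) (y : Z) : R := INR (local_time Y (2 * n - 1) y).

Lemma srw_path_abs_le Y : srw_path Y -> forall k, (Z.abs (Y k) <= Z.of_nat k)%Z.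
Proof.
  intros [H0 Hstep] k. induction k as [|k IH].
  - rewrite H0. simpl. lia.
  - specialize (Hstep k). lia.
Qed.

Lemma lsum_sites_eta Y n (g : Z -> R) : (1 <= n)%nat -> srw_path Y ->
  lsum (sites n) (fun y => eta Y n y * g y) = lsum (seq 0 (2 * n)) (fun k => g (Y k)).
Proof.
  intros Hn HY. unfold eta, local_time.
  replace (S (2 * n - 1)) with (2 * n)%nat by lia.
  rewrite (lsum_ext _ _ (fun y => lsum (seq 0 (2 * n))
                                     (fun k => if Z.eqb (Y k) y then g y else 0))).
  - rewrite lsum_swap. apply lsum_ext. intros k Hk.
    apply lsum_delta; rewrite sites_window; [apply NoDup_window|].
    apply in_window. apply in_seq in Hk. pose proof (srw_path_abs_le Y HY k). lia.
  - intros y _. rewrite INR_length_filter, Rmult_comm, <- lsum_scal.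
    apply lsum_ext. intros k _. destruct (Z.eqb (Y k) y); lra.
Qed.

Lemma sum_sq_eta_ge_window Y n K : (1 <= n)%nat -> srw_path Y ->
  (forall k, (k <= 2 * n)%nat -> (Z.abs (Y k) <= Z.of_nat K)%Z) ->
  4 * INR n ^ 2 <= (2 * INR K + 1) * lsum (sites n) (fun y => eta Y n y ^ 2).
Proof.
  intros Hn HY Hrange.
  set (p := fun y => (Z.abs y <=? Z.of_nat K)%Z).
  assert (Hocc : lsum (filter p (sites n)) (eta Y n) = 2 * INR n).
  { rewrite lsum_filter.
    rewrite (lsum_ext _ _ (fun y => eta Y n y * (if p y then 1 else 0)))
      by (intros y _; destruct (p y); lra).
    rewrite lsum_sites_eta by assumption.
    rewrite (lsum_ext _ _ (fun _ => 1)).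
    - rewrite lsum_const, length_seq, mult_INR. simpl. lra.
    - intros k Hk. apply in_seq in Hk. unfold p.
      rewrite (proj2 (Z.leb_le _ _)) by (apply Hrange; lia). reflexivity. }
  assert (Hlen : INR (length (filter p (sites n))) <= 2 * INR K + 1).
  { replace (2 * INR K + 1) with (INR (2 * K + 1)) by (rewrite plus_INR, mult_INR; simpl; lra).
    apply le_INR, length_filter_abs_le. rewrite sites_window. apply NoDup_window. }
  assert (Hsq : lsum (filter p (sites n)) (fun y => eta Y n y ^ 2)
                <= lsum (sites n) (fun y => eta Y n y ^ 2)).
  { rewrite lsum_filter. apply lsum_le. intros y _.
    destruct (p y); [lra | apply pow2_ge_0]. }
  pose proof (lsum_cauchy_schwarz (filter p (sites n)) (eta Y n)) as Hcs.
  rewrite Hocc in Hcs.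
  assert (0 <= lsum (filter p (sites n)) (fun y => eta Y n y ^ 2))
    by (apply lsum_nonneg; intros; apply pow2_ge_0).
  pose proof (pos_INR (length (filter p (sites n)))).
  nra.
Qed.

Lemma sum_sq_eta_ge Y n M : (1 <= n)%nat -> srw_path Y -> 1 <= M ->
  (forall k, (k <= 2 * n)%nat -> IZR (Z.abs (Y k)) < M) ->
  4 * INR n ^ 2 <= 3 * M * lsum (sites n) (fun y => eta Y n y ^ 2).
Proof.
  intros Hn HY HM Hrange.
  pose proof (sum_sq_eta_ge_window Y n (Z.to_nat (Zfloor M)) Hn HY
                (fun k Hk => abs_le_Zfloor M (Y k) (Hrange k Hk))) as H.
  pose proof (INR_Zfloor_le M ltac:(lra)).
  assert (0 <= lsum (sites n) (fun y => eta Y n y ^ 2))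
    by (apply lsum_nonneg; intros; apply pow2_ge_0).
  nra.
Qed.

Lemma eta_mul_abs_le_1 d2 d3 n (x t : R) : (1 <= n)%nat -> 2 * d2 <= d3 ->
  0 <= x < Rpower (INR n) (1/2 + d2) -> Rabs t <= b_n d2 d3 n -> Rabs (x * t) <= 1.
Proof.
  intros Hn Hd [Hx0 Hx] Ht.
  assert (HN : 1 <= INR n) by (apply (le_INR 1); exact Hn).
  assert (HD : 0 < d_n3 d3 n) by apply exp_pos.
  assert (Hscale : Rpower (INR n) (1/2 + d2) * b_n d2 d3 n <= 1).
  { unfold b_n, Rdiv. rewrite <- Rmult_assoc, <- Rpower_plus.
    apply (Rmult_le_reg_r (d_n3 d3 n)); [exact HD|].
    rewrite Rmult_assoc, Rinv_l, Rmult_1_r, (Rmult_1_l (d_n3 d3 n)) by lra.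
    apply Rle_Rpower; lra. }
  rewrite Rabs_mult, Rabs_pos_eq by exact Hx0.
  apply Rle_trans with (Rpower (INR n) (1/2 + d2) * b_n d2 d3 n); [|exact Hscale].
  apply Rmult_le_compat; try lra. apply Rabs_pos.
Qed.

Lemma abs_integrand_le Y n D t : (forall y, Rabs (eta Y n y * t) <= 1) ->
  Rabs (prod_cos Y n t * exp (- (t ^ 2 * D ^ 2) / 2))
  <= 1 / (1 + lsum (sites n) (fun y => eta Y n y ^ 2) / 4 * t ^ 2).
Proof.
  intro Hphase.
  destruct (prod_le_inv_one_plus_lsum (sites n) (fun y => cos (eta Y n y * t))
              (fun y => (eta Y n y * t) ^ 2 / 4)) as [HP0 HP].
  { intros y _. split; [pose proof (pow2_ge_0 (eta Y n y * t)); lra|].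
    apply cos_le_inv_one_plus_sqr, Hphase. }
  rewrite (lsum_ext _ _ (fun y => t ^ 2 / 4 * eta Y n y ^ 2)), lsum_scal in HP
    by (intros; simpl; field).
  replace (t ^ 2 / 4 * lsum (sites n) (fun y => eta Y n y ^ 2))
    with (lsum (sites n) (fun y => eta Y n y ^ 2) / 4 * t ^ 2) in HP by field.
  unfold prod_cos. fold (eta Y n) in *.
  set (P := fold_right Rmult 1 _) in *.
  assert (Hgauss : 0 < exp (- (t ^ 2 * D ^ 2) / 2) <= 1).
  { split; [apply exp_pos|].
    assert (Hneg : - (t ^ 2 * D ^ 2) / 2 <= 0)
      by (pose proof (pow2_ge_0 t); pose proof (pow2_ge_0 D); nra).
    rewrite <- exp_0. destruct (Rle_lt_or_eq_dec _ _ Hneg) as [Hlt | ->];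
      [left; apply exp_increasing, Hlt | lra]. }
  rewrite Rabs_pos_eq by nra. nra.
Qed.

Lemma ex_RInt_integrand Y n D a b :
  ex_RInt (fun t => prod_cos Y n t * exp (- (t ^ 2 * D ^ 2) / 2)) a b.
Proof.
  apply (@ex_RInt_continuous R_CompleteNormedModule). intros z _.
  apply (@ex_derive_continuous R_AbsRing R_NormedModule). apply ex_derive_mult.
  - unfold prod_cos. induction (sites n) as [|y l IH]; simpl.
    + apply ex_derive_const.
    + apply ex_derive_mult; [auto_derive; trivial | exact IH].
  - auto_derive. trivial.
Qed.

Lemma is_RInt_inv_one_plus_sqr a b : 0 < a ->
  is_RInt (fun t => 1 / (1 + a * t ^ 2)) (- b) b
          ((atan (sqrt a * b) - atan (sqrt a * - b)) / sqrt a).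
Proof.
  intro Ha. set (r := sqrt a).
  assert (Hr : 0 < r) by (apply sqrt_lt_R0; exact Ha).
  assert (Hr2 : r * r = a) by (apply sqrt_sqrt; lra).
  replace ((atan (r * b) - atan (r * - b)) / r)
    with (minus ((fun t => atan (r * t) / r) b) ((fun t => atan (r * t) / r) (- b)))
    by (unfold minus, plus, opp; simpl; field; lra).
  apply (is_RInt_derive (fun t => atan (r * t) / r)).
  - intros x _. auto_derive; [trivial|].
    rewrite <- Hr2. assert (0 <= (r * x) * (r * x)) by nra. field; split; nra.
  - intros x _. apply (ex_derive_continuous (fun t => 1 / (1 + a * t ^ 2))).
    auto_derive. nra.
Qed.

Lemma abs_RInt_le_pi_div_sqrt (f : R -> R) a b : 0 < a -> 0 <= b ->
  ex_RInt f (- b) b -> (forall t, - b <= t <= b -> Rabs (f t) <= 1 / (1 + a * t ^ 2)) ->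
  Rabs (RInt f (- b) b) <= PI / sqrt a.
Proof.
  intros Ha Hb Hf Hpt.
  pose proof (norm_RInt_le f (fun t => 1 / (1 + a * t ^ 2)) (- b) b _ _
                ltac:(lra) Hpt (RInt_correct _ _ _ Hf) (is_RInt_inv_one_plus_sqr a b Ha)) as H.
  eapply Rle_trans; [exact H|].
  apply Rmult_le_compat_r; [left; apply Rinv_0_lt_compat, sqrt_lt_R0, Ha|].
  pose proof (atan_bound (sqrt a * b)). pose proof (atan_bound (sqrt a * - b)). lra.
Qed.

Lemma pi_div_sqrt_le_Rpower N d1 S : 1 <= N ->
  4 * N ^ 2 <= 3 * Rpower N (1/2 + d1) * S ->
  PI / sqrt (S / 4) <= 2 * PI * Rpower N (- (3/4) + d1 / 2).
Proof.
  intros HN HS.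
  set (p := Rpower N (- (3/4) + d1 / 2)).
  assert (Hp : 0 < p) by apply exp_pos.
  assert (HM : Rpower N (1/2 + d1) = p * p * N * N).
  { transitivity (p * p * Rpower N 1 * Rpower N 1); [|now rewrite Rpower_1 by lra].
    unfold p. rewrite <- !Rpower_plus. f_equal. lra. }
  replace (4 * N ^ 2) with (N ^ 2 * 4) in HS by ring.
  replace (3 * Rpower N (1/2 + d1) * S) with (N ^ 2 * (3 * (p * p * S))) in HS
    by (rewrite HM; ring).
  apply Rmult_le_reg_l in HS; [|nra].
  assert (Ha : 1 / 3 <= p * p * (S / 4)) by lra.
  set (r := sqrt (S / 4)).
  assert (Hr2 : r * r = S / 4) by (apply sqrt_sqrt; nra).
  assert (Hr : 0 < r) by (apply sqrt_lt_R0; nra).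
  assert (Hsq : (p * r) * (p * r) = p * p * (S / 4)) by (rewrite <- Hr2; ring).
  assert (Hpr : 1 / 2 <= p * r).
  { destruct (Rle_lt_dec (1 / 2) (p * r)) as [|Hlt]; [assumption|].
    assert (0 < p * r) by (apply Rmult_lt_0_compat; lra). nra. }
  apply (Rmult_le_reg_r r); [exact Hr|].
  replace (PI / r * r) with PI by (field; lra).
  pose proof PI_RGT_0. nra.
Qed.

Theorem lemma6 (d1 d2 d3 : R) :
  0 < d1 -> 0 < d2 -> 0 < d3 -> d3 > 2 * d2 ->
  exists C : R,
    forall (n : nat) (Y : nat -> Z),
      (1 <= n)%nat -> srw_path Y -> event_A d1 d2 Y n ->
      Rabs (I0 d2 d3 Y n) <= C * Rpower (INR n) (- (3/4) + d1 / 2).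
Proof.
  intros Hd1 Hd2 Hd3 Hd23. exists (2 * PI). intros n Y Hn HY [Hrange Hlocal].
  assert (HN : 1 <= INR n) by (apply (le_INR 1); exact Hn).
  assert (HM : 1 <= Rpower (INR n) (1/2 + d1)).
  { apply Rle_trans with (Rpower (INR n) 0); [rewrite Rpower_O; lra | apply Rle_Rpower; lra]. }
  set (S := lsum (sites n) (fun y => eta Y n y ^ 2)).
  assert (HS : 4 * INR n ^ 2 <= 3 * Rpower (INR n) (1/2 + d1) * S)
    by (apply sum_sq_eta_ge; assumption).
  assert (Hb : 0 < b_n d2 d3 n) by (apply Rdiv_lt_0_compat; apply exp_pos).
  eapply Rle_trans; [|apply pi_div_sqrt_le_Rpower; eassumption].
  apply abs_RInt_le_pi_div_sqrt; [nra | lra | apply ex_RInt_integrand|].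
  intros t Ht. apply abs_integrand_le. intro y.
  apply (eta_mul_abs_le_1 d2 d3 n); [exact Hn | lra | split; [apply pos_INR | apply Hlocal]|].
  apply Rabs_le. lra.
Qed.
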